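(* Consider an open quantum system on a finite-dimensional Hilbert space $\mathcal H$ with Hamiltonian $H$ and coupling operators $L_1,\dots,L_K$. Let $V$ be a Lyapunov operator (commuting with $H$) which is a projection, $V^2=V$. If $V$ satisfies Condition DS but does not satisfy Condition ES, then at least one of the coupling operators $L_k$ cannot be written as $L_k=U_kV$ with $U_k$ unitary. In particular, in the single-channel case ($K=1$), the coupling operator $L$ cannot be written as $L=UV$ with $U$ unitary.
   Context: For an observable $X$ commuting with $H$ the generator is $\mathcal G(X)=\sum_{k=1}^K\big(L_k^\dagger XL_k-\tfrac12L_k^\dagger L_kX-\tfrac12XL_k^\dagger L_k\big)$ (the system density evolves by $\dot\rho=-i[H,\rho]+\sum_k(L_k\rho L_k^\dagger-\tfrac12L_k^\dagger L_k\rho-\tfrac12\rho L_k^\dagger L_k)$). A Lyapunov operator is a self-adjoint $V\ge0$ with smallest eigenvalue $0$ and $\mathcal G(V)\le0$. Dissipation functional: $\mathfrak D(X)=\mathcal G(X^\dagger X)-\mathcal G(X^\dagger)X-X^\dagger\mathcal G(X)$. Condition ES: $\mathcal G(V)\le-cV$ for some $c>0$. Condition DS: $\mathcal G(V)\le0$ and $cV\le\mathfrak D(V)$ for some $c>0$. *)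

(* operators on the finite-dimensional Hilbert space C^n are
   square matrices 'M[C]_n over C : numClosedFieldType (e.g. the complex
   numbers). *)
From HB Require Import structures.
From mathcomp Require Import all_boot all_order all_algebra.
From mathcomp Require Export spectral.
Set Implicit Arguments.
Unset Strict Implicit.
Unset Printing Implicit Defensive.
Import Order.TTheory GRing.Theory Num.Theory.
Local Open Scope ring_scope.
Local Open Scope sesquilinear_scope.

Definition adj (C : numClosedFieldType) (n : nat) (A : 'M[C]_n) : 'M[C]_n :=
  A ^t*.

Definition selfadj (C : numClosedFieldType) (n : nat) (A : 'M[C]_n) : Prop :=
  adj A = A.

(* Positive semidefinite operator A >= 0: self-adjoint with nonnegative
   quadratic form (in a numClosedFieldType, 0 <= z means z is real and >= 0). *)
Definition psd (C : numClosedFieldType) (n : nat) (A : 'M[C]_n) : Prop :=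
  selfadj A /\ forall u : 'rV[C]_n, 0 <= (u *m A *m u ^t*) 0 0.

Definition ople (C : numClosedFieldType) (n : nat) (X Y : 'M[C]_n) : Prop :=
  psd (Y - X).

(* Generator G(X) = sum_k (L_k^† X L_k - 1/2 L_k^† L_k X - 1/2 X L_k^† L_k)
   (the Heisenberg-picture Lindblad generator for X commuting with H). *)
Definition gen (C : numClosedFieldType) (n K : nat) (L : 'I_K -> 'M[C]_n)
    (X : 'M[C]_n) : 'M[C]_n :=
  \sum_(k < K) (adj (L k) *m X *m L k
                - 2^-1 *: (adj (L k) *m L k *m X)
                - 2^-1 *: (X *m adj (L k) *m L k)).

Definition dissip (C : numClosedFieldType) (n K : nat) (L : 'I_K -> 'M[C]_n)
    (X : 'M[C]_n) : 'M[C]_n :=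
  gen L (adj X *m X) - gen L (adj X) *m X - adj X *m gen L X.

(* Lyapunov operator: self-adjoint V >= 0 whose smallest eigenvalue is 0
   (for V >= 0: 0 is an eigenvalue of V), and G(V) <= 0. *)
Definition lyapunov (C : numClosedFieldType) (n K : nat) (L : 'I_K -> 'M[C]_n)
    (V : 'M[C]_n) : Prop :=
  selfadj V /\ psd V /\ eigenvalue V 0 /\ ople (gen L V) 0.

Definition condES (C : numClosedFieldType) (n K : nat) (L : 'I_K -> 'M[C]_n)
    (V : 'M[C]_n) : Prop :=
  exists c : C, 0 < c /\ ople (gen L V) (- (c *: V)).

Definition condDS (C : numClosedFieldType) (n K : nat) (L : 'I_K -> 'M[C]_n)
    (V : 'M[C]_n) : Prop :=
  ople (gen L V) 0 /\ exists c : C, 0 < c /\ ople (c *: V) (dissip L V).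

(* If every coupling operator is L_k = U_k V with U_k unitary and V an
   orthogonal projection, then L_k^† L_k = V, and each channel contributes
   V (U_k^† V U_k) V - V to G(V).  Hence G(V) is compressed by V,
   G(V) V = V G(V) = G(V), and since V^† V = V the dissipation collapses to
   D(V) = G(V) - 2 G(V) = -G(V).  Condition DS, c V <= D(V), then reads
   G(V) <= -c V, which is Condition ES. *)
From mathcomp Require Import all_boot all_order all_algebra.
From mathcomp Require Import spectral.
From Stdlib Require Import Classical.
Import Order.TTheory GRing.Theory Num.Theory.
Local Open Scope ring_scope.
Local Open Scope sesquilinear_scope.

Lemma adjM (C : numClosedFieldType) (n : nat) (A B : 'M[C]_n) :
  adj (A *m B) = adj B *m adj A.
Proof. by rewrite /adj trmx_mul map_mxM. Qed.

Section UnitaryTimesProjection.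

Variables (C : numClosedFieldType) (n : nat) (V : 'M[C]_n).
Hypotheses (V_selfadj : selfadj V) (V_proj : V *m V = V).

Lemma adj_unitary_proj_mul (U : 'M[C]_n) :
  U \is unitarymx -> adj (U *m V) *m (U *m V) = V.
Proof.
move=> U_unitary; rewrite adjM V_selfadj mulmxA.
by rewrite (mulmxKtV V U_unitary) // V_proj.
Qed.

Lemma channel_term_unitary_proj (U : 'M[C]_n) :
  U \is unitarymx ->
  adj (U *m V) *m V *m (U *m V) - 2^-1 *: (adj (U *m V) *m (U *m V) *m V)
    - 2^-1 *: (V *m adj (U *m V) *m (U *m V))
  = V *m (adj U *m V *m U) *m V - V.
Proof.
move=> U_unitary.
rewrite -[V *m adj (U *m V) *m _]mulmxA adj_unitary_proj_mul // V_proj.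
rewrite adjM V_selfadj !mulmxA -addrA -opprD -scalerDl.
have -> : (2^-1 + 2^-1 : C) = 1.
  by rewrite -mulr2n -[_ *+ 2]mulr_natr mulVf // pnatr_eq0.
by rewrite scale1r.
Qed.

Lemma proj_compress_left (X : 'M[C]_n) : V *m (V *m X *m V - V) = V *m X *m V - V.
Proof. by rewrite mulmxBr V_proj !mulmxA V_proj. Qed.

Lemma proj_compress_right (X : 'M[C]_n) : (V *m X *m V - V) *m V = V *m X *m V - V.
Proof. by rewrite mulmxBl V_proj -!mulmxA V_proj. Qed.

Variables (K : nat) (L : 'I_K -> 'M[C]_n).
Hypothesis L_unitary_proj :
  forall k, exists U : 'M[C]_n, U \is unitarymx /\ L k = U *m V.

Lemma gen_unitary_proj :
  V *m gen L V = gen L V /\ gen L V *m V = gen L V.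
Proof.
rewrite /gen mulmx_sumr mulmx_suml; split; apply: eq_bigr => k _;
  have [U [U_unitary ->]] := L_unitary_proj k;
  rewrite channel_term_unitary_proj //.
- exact: proj_compress_left.
- exact: proj_compress_right.
Qed.

Lemma dissip_unitary_proj : dissip L V = - gen L V.
Proof.
have [VG GV] := gen_unitary_proj.
by rewrite /dissip V_selfadj V_proj GV VG subrr sub0r.
Qed.

Lemma condES_of_condDS_unitary_proj : condDS L V -> condES L V.
Proof.
move=> [_ [c [c_gt0 cV_le_D]]]; exists c; split => //.
by move: cV_le_D; rewrite /ople dissip_unitary_proj addrC.
Qed.

End UnitaryTimesProjection.

Theorem corollary24 (C : numClosedFieldType) (n K : nat)
    (H : 'M[C]_n) (L : 'I_K -> 'M[C]_n) (V : 'M[C]_n) :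
  selfadj H ->
  H *m V = V *m H ->
  lyapunov L V ->
  V *m V = V ->
  condDS L V ->
  ~ condES L V ->
  exists k : 'I_K, ~ (exists U : 'M[C]_n, U \is unitarymx /\ L k = U *m V).
Proof.
move=> _ _ [V_selfadj _] V_proj DS notES.
apply: not_all_ex_not => L_unitary_proj; apply: notES.
exact: condES_of_condDS_unitary_proj.
Qed.
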